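(* Let $L$ denote the problem of finding both the largest and the smallest of $n$ elements by pairwise comparisons. Then for every integer $k\ge 0$, $D_k(L,n)=\min\{n+k-1,\ \lceil 3n/2\rceil-2\}$.
   Context: Problem $L$ on $n$ elements: the input is an assignment of $n$ distinct real numbers $a_1,\dots,a_n$ to $n$ labeled elements; a query is a pair $\{i,j\}$ and its answer tells whether $a_i<a_j$; the goal is to determine which element is the largest and which is the smallest. $D_k(L,n)$ is defined by the following game between a Questioner and an Adversary. The Adversary chooses an input (the current input). The Questioner, who always knows the current input, asks queries one after another; each query is answered according to the current input. Between queries the Adversary may replace the current input by any other input consistent with all answers given so far, but at most $k$ times in total. The game ends as soon as the answers given determine both the largest and the smallest element. $D_k(L,n)$ is the number of queries asked when the Questioner minimizes and the Adversary maximizes this number. *)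

From mathcomp Require Import all_boot all_fingroup.
Set Implicit Arguments. Unset Strict Implicit. Unset Printing Implicit Defensive.

(* Only the relative order matters for the game, so we take the
   distinct numbers to be 0,...,n-1, i.e. an input is a permutation a,
   element i receiving the value a i. *)
Definition input (n : nat) := {perm 'I_n}.

Definition query (n : nat) := ('I_n * 'I_n)%type.
Definition answer n (a : input n) (q : query n) : bool := (a q.1 < a q.2)%N.

Definition history (n : nat) := seq (query n * bool).

Definition consistent n (a : input n) (h : history n) : bool :=
  all (fun t => answer a t.1 == t.2) h.

Definition determined n (h : history n) : Prop :=
  exists i j : 'I_n, forall b : input n, consistent b h ->
    (forall x, (b x <= b i)%N) /\ (forall x, (b j <= b x)%N).

Definition adv_move n (a : input n) (c : nat) (h : history n)
  (a' : input n) (c' : nat) : Prop :=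
  (a' = a /\ c' = c) \/ (c = c'.+1 /\ consistent a' h).

(* questioner_wins m h a c : from the position with answered history h,
   current input a and c remaining changes, the Questioner (who knows the
   current input) can force the game to end after at most m more queries. *)
Fixpoint questioner_wins n (m : nat) (h : history n) (a : input n) (c : nat)
  : Prop :=
  match m with
  | 0 => determined h
  | m'.+1 => determined h \/
      exists q : query n, q.1 != q.2 /\
        let h' := (q, answer a q) :: h in
        forall a' c', adv_move a c h' a' c' -> questioner_wins m' h' a' c'
  end.

Definition D_value (k n v : nat) : Prop :=
  (forall a : input n, questioner_wins v [::] a k) /\
  (forall m, (forall a : input n, questioner_wins m [::] a k) -> (v <= m)%N).

(* An element is a max-candidate while it has never lost a comparison and a
   min-candidate while it has never won one.  The answers determine both
   extremes exactly when one candidate of each kind is left, so [2n - 2]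
   candidacies have to be removed, at most two per query.

   Lower bound: the adversary keeps his input layered (elements that only lost
   below the fresh, i.e. never compared, ones, these below the elements that
   only won), so only a comparison of two fresh elements removes two
   candidacies.  He spends a change of input to re-layer whenever a fresh
   element is compared, and when no change is left he fixes a threshold at the
   largest min-candidate, on the wrong side of which only fresh elements lie.
   With [s] fresh elements and [c] changes left this allows at most
   [max (s/2) (s - 1 - c)] double removals.

   Upper bound: the questioner, who sees the current input, either pairs up
   fresh elements ([s/2] double removals) or builds a chain, comparing the
   largest fresh element with an element that only lost and lies above all
   fresh ones; every link removes two candidacies and only a change of input
   breaks the chain, which gives [s - 1 - c] of them. *)

From mathcomp Require Import all_boot all_fingroup.
From mathcomp Require Import zify.
Set Implicit Arguments. Unset Strict Implicit. Unset Printing Implicit Defensive.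

Lemma cardsID1 (T : finType) (A B : {set T}) x :
  #|A :&: B| = (x \in A :&: B) + #|(A :\ x) :&: B|.
Proof. by rewrite (cardsD1 x); congr (_ + _); apply: eq_card => z; rewrite !inE andbA. Qed.

Lemma ltn_lex p q x y n : p < q -> x < n -> p * n + x < q * n + y.
Proof.
move=> pq xn; apply: (@leq_trans (p.+1 * n)); first by rewrite mulSnr ltn_add2l.
exact: leq_trans (leq_mul pq (leqnn n)) (leq_addr y _).
Qed.

Section Game.

Variable n : nat.
Implicit Types (h : history n) (a b : input n) (t : query n * bool).

Definition loser t : 'I_n := if t.2 then t.1.1 else t.1.2.
Definition winner t : 'I_n := if t.2 then t.1.2 else t.1.1.

Definition lost_to (x y : 'I_n) : query n * bool := ((x, y), true).

Definition wf_history h : bool := all (fun t => t.1.1 != t.1.2) h.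

Definition max_cand h : {set 'I_n} := [set z | z \notin map loser h].
Definition min_cand h : {set 'I_n} := [set z | z \notin map winner h].
Definition fresh h : {set 'I_n} := max_cand h :&: min_cand h.
Definition lost_only h : {set 'I_n} := min_cand h :\: max_cand h.
Definition won_only h : {set 'I_n} := max_cand h :\: min_cand h.

Definition uncertainty h : nat := #|max_cand h| + #|min_cand h| - 2.

Lemma in_fresh h z : (z \in fresh h) = (z \in max_cand h) && (z \in min_cand h).
Proof. exact: in_setI. Qed.

Lemma in_lost_only h z :
  (z \in lost_only h) = (z \notin max_cand h) && (z \in min_cand h).
Proof. exact: in_setD. Qed.

Lemma in_won_only h z :
  (z \in won_only h) = (z \notin min_cand h) && (z \in max_cand h).
Proof. exact: in_setD. Qed.

Lemma lost_onlyE h : lost_only h = min_cand h :\: fresh h.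
Proof.
apply/setP => z; rewrite in_lost_only !in_setD in_fresh.
by case: (z \in min_cand h); rewrite ?andbF ?andbT.
Qed.

Lemma won_onlyE h : won_only h = max_cand h :\: fresh h.
Proof.
apply/setP => z; rewrite in_won_only !in_setD in_fresh.
by case: (z \in max_cand h); rewrite ?andbF ?andbT.
Qed.

Lemma max_cand_cons t h : max_cand (t :: h) = max_cand h :\ loser t.
Proof. by apply/setP => z; rewrite !inE negb_or andbC eq_sym. Qed.

Lemma min_cand_cons t h : min_cand (t :: h) = min_cand h :\ winner t.
Proof. by apply/setP => z; rewrite !inE negb_or andbC eq_sym. Qed.

Lemma fresh_cons t h : fresh (t :: h) = fresh h :\ loser t :\ winner t.
Proof.
apply/setP => z; rewrite in_fresh max_cand_cons min_cand_cons !in_setD1 in_fresh.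
by case: (z == loser t); case: (z == winner t); rewrite ?andbF.
Qed.

Lemma card_max_cand_cons t h :
  #|max_cand h| = (loser t \in max_cand h) + #|max_cand (t :: h)|.
Proof. by rewrite max_cand_cons -cardsD1. Qed.

Lemma card_min_cand_cons t h :
  #|min_cand h| = (winner t \in min_cand h) + #|min_cand (t :: h)|.
Proof. by rewrite min_cand_cons -cardsD1. Qed.

Lemma card_fresh_cons t h : loser t != winner t ->
  #|fresh h| = (loser t \in fresh h) + (winner t \in fresh h) + #|fresh (t :: h)|.
Proof.
move=> lw; rewrite fresh_cons (cardsD1 (loser t)) (cardsD1 (winner t) (_ :\ _)).
by rewrite in_setD1 (eq_sym (winner t)) lw addnA.
Qed.

Lemma answer_loser_winner b t : t.1.1 != t.1.2 ->
  (answer b t.1 == t.2) = (b (loser t) < b (winner t)).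
Proof.
case: t => [[i j] []] /= ne; rewrite /answer /loser /winner /= ?eqb_id //.
rewrite eqbF_neg -leqNgt leq_eqVlt val_eqE (inj_eq perm_inj) eq_sym.
by rewrite (negbTE ne).
Qed.

Lemma consistentE b h : wf_history h ->
  consistent b h = all (fun t => b (loser t) < b (winner t)) h.
Proof. by move=> /allP W; apply: eq_in_all => t /W; apply: answer_loser_winner. Qed.

Lemma consistent_answer a q h :
  consistent a ((q, answer a q) :: h) = consistent a h.
Proof. by rewrite /consistent /= eqxx. Qed.

Lemma answer_loser_lt a q : q.1 != q.2 ->
  a (loser (q, answer a q)) < a (winner (q, answer a q)).
Proof. by move=> ne; rewrite -answer_loser_winner ?eqxx. Qed.

Lemma adv_move_consistent a a' c c' q h : consistent a h ->
  adv_move a c ((q, answer a q) :: h) a' c' ->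
  consistent a' ((q, answer a q) :: h).
Proof. by move=> C [[-> _]|[_ C']] //; rewrite consistent_answer. Qed.

Lemma exists_input_refining (key : 'I_n -> nat) :
  exists p : input n, forall x y, key x < key y -> p x < p y.
Proof.
pose lex x := key x * n + x.
have lex_inj : injective lex.
  move=> x y /(congr1 (modn^~ n)); rewrite /lex !modnMDl !modn_small //.
  exact: val_inj.
have lex_lt x y : key x < key y -> lex x < lex y by move/ltn_lex; apply.
pose rank x := #|[set y | lex y < lex x]|.
have rank_lt x : rank x < n.
  rewrite -[X in _ < X](card_ord n) -cardsT; apply/proper_card/properP.
  by split; [apply: subsetT | exists x; rewrite !inE ?ltnn].
have rankE x y : (rank x < rank y) = (lex x < lex y).
  apply/idP/idP => [|lt_xy]; last first.
    apply/proper_card/properP; split; last by exists x; rewrite !inE ?ltnn.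
    by apply/subsetP => z; rewrite !inE => /ltn_trans; apply.
  apply: contraLR; rewrite -!leqNgt => le_yx; apply: subset_leq_card.
  by apply/subsetP => z; rewrite !inE => /leq_trans; apply.
have rank_inj : injective (fun x => Ordinal (rank_lt x)).
  move=> x y /(congr1 val) /= E; apply: lex_inj.
  by case: (ltngtP (lex x) (lex y)) => [lt|lt|//]; move: lt; rewrite -rankE E ltnn.
by exists (perm rank_inj) => x y /lex_lt; rewrite !permE -rankE.
Qed.

Lemma exists_consistent_input h (key : 'I_n -> nat) : wf_history h ->
  {in h, forall t, key (loser t) < key (winner t)} ->
  exists2 p : input n, consistent p h & forall x y, key x < key y -> p x < p y.
Proof.
move=> W key_lt; have [p Hp] := exists_input_refining key.
by exists p => //; rewrite consistentE //; apply/allP => t /key_lt /Hp.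
Qed.

Lemma input_argmax a (A : {set 'I_n}) x0 : x0 \in A ->
  exists2 z, z \in A & {in A, forall w, w != z -> a w < a z}.
Proof.
move=> x0A; case: (@arg_maxnP _ x0 (fun z => z \in A) (fun z => a z) x0A).
move=> z zA z_max; exists z => // w wA wz.
by rewrite ltn_neqAle val_eqE (inj_eq perm_inj) wz; apply: z_max.
Qed.

Lemma lift_max_cand a h x : wf_history h -> consistent a h -> x \in max_cand h ->
  exists2 b, consistent b h & forall y, y != x -> b y < b x.
Proof.
rewrite inE => W C x_unbeaten.
pose key z := if z == x then n else a z.
have [b Cb b_key] : exists2 b, consistent b h & forall y z, key y < key z -> b y < b z.
  apply: exists_consistent_input => // t th; rewrite /key.
  have -> : (loser t == x) = false by apply: contraNF x_unbeaten => /eqP <-; apply: map_f.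
  case: eqP => _; first exact: ltn_ord.
  by move: C; rewrite consistentE // => /allP; apply.
by exists b => // y yx; apply: b_key; rewrite /key (negbTE yx) eqxx ltn_ord.
Qed.

Lemma lift_min_cand a h x : wf_history h -> consistent a h -> x \in min_cand h ->
  exists2 b, consistent b h & forall y, y != x -> b x < b y.
Proof.
rewrite inE => W C x_unwon.
pose key z := if z == x then 0 else (a z).+1.
have [b Cb b_key] : exists2 b, consistent b h & forall y z, key y < key z -> b y < b z.
  apply: exists_consistent_input => // t th; rewrite /key.
  have -> : (winner t == x) = false by apply: contraNF x_unwon => /eqP <-; apply: map_f.
  case: eqP => _ //; rewrite ltnS.
  by move: C; rewrite consistentE // => /allP; apply.
by exists b => // y yx; apply: b_key; rewrite /key (negbTE yx) eqxx.
Qed.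

Definition layered a h : Prop :=
  {in lost_only h & max_cand h, forall x y, a x < a y} /\
  {in fresh h & won_only h, forall x y, a x < a y}.

Lemma layered_fresh a h x y : layered a h ->
  x \in max_cand h -> y \in min_cand h -> a x < a y -> x \in fresh h /\ y \in fresh h.
Proof.
move=> [lost_below fresh_below] xM yW lt.
have yM : y \in max_cand h.
  apply: contraTT lt => yM; rewrite -leqNgt ltnW // lost_below //.
  by rewrite in_lost_only yM.
have xW : x \in min_cand h.
  apply: contraTT lt => xW; rewrite -leqNgt ltnW // fresh_below ?in_fresh ?yM //.
  by rewrite in_won_only xW.
by rewrite !in_fresh xM xW yM.
Qed.

Lemma layered_cons a h t : layered a h ->
  loser t \notin fresh h -> winner t \notin fresh h -> layered a (t :: h).
Proof.
rewrite /layered !lost_onlyE !won_onlyE => -[lost_below fresh_below] lF wF.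
have setD1_id (A : {set 'I_n}) x : x \notin A -> A :\ x = A.
  by move=> xA; apply/setDidPl; rewrite disjoint_sym disjoints1.
have fresh_eq : fresh (t :: h) = fresh h.
  by rewrite fresh_cons !setD1_id // in_setD1 (negbTE wF) andbF.
have max_sub : max_cand (t :: h) \subset max_cand h.
  by rewrite max_cand_cons subD1set.
have min_sub : min_cand (t :: h) \subset min_cand h.
  by rewrite min_cand_cons subD1set.
rewrite fresh_eq; split=> x y xI yI.
  by apply: lost_below; [apply: (subsetP (setSD _ min_sub)) | apply: (subsetP max_sub)].
by apply: fresh_below => //; apply: (subsetP (setSD _ max_sub)).
Qed.

(* Sort by level (lost-only, then fresh or settled, then won-only), keeping
   the order of [b] within a level. *)
Lemma exists_layered b h : wf_history h -> consistent b h ->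
  exists2 a, consistent a h & layered a h.
Proof.
move=> W C.
pose level z := (z \notin lost_only h) + (z \in won_only h).
pose key z := level z * n + b z.
have key_lt_level u v : level u < level v -> key u < key v by move/ltn_lex; apply.
have [a Ca a_key] :
    exists2 a, consistent a h & forall x y, key x < key y -> a x < a y.
  apply: exists_consistent_input => // t th.
  have lM : loser t \notin max_cand h by rewrite inE negbK map_f.
  have wW : winner t \notin min_cand h by rewrite inE negbK map_f.
  have lw : b (loser t) < b (winner t).
    by move: C; rewrite consistentE // => /allP; apply.
  have level_le : level (loser t) <= level (winner t).
    rewrite /level in_lost_only in_won_only (negbTE lM).
    by rewrite in_lost_only in_won_only (negbTE wW) !andbF; case: (loser t \in _).
  by rewrite /key -addnS leq_add // leq_mul.
exists a => //; split=> x y xI yI; apply/a_key/key_lt_level.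
  move: xI; rewrite /level !in_lost_only !in_won_only yI.
  by case/andP => /negbTE -> ->.
move: xI yI; rewrite /level in_fresh !in_lost_only !in_won_only.
by case/andP => -> -> /andP [/negbTE -> ->].
Qed.

Definition wrong_side a h (th : nat) : nat :=
  #|max_cand h :&: [set x | a x < th]| + #|min_cand h :&: [set y | th < a y]|.

Definition max_doubles (s c : nat) : nat := maxn (s %/ 2) (s - 1 - c).

Lemma max_doubles_fresh s c (fx fy : bool) : fx || fy ->
  max_doubles s c + (fx && fy) <= max_doubles (fx + fy + s) c.+1.
Proof. by case: fx; case: fy => //= _; rewrite /max_doubles; lia. Qed.

Definition pairing_potential h (a : input n) (c : nat) : nat := #|fresh h| %/ 2.

Definition chain_head a h : bool :=
  [exists u in lost_only h, [forall z in fresh h, a z < a u]].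

(* Starting a chain uses up two fresh elements and every further link one;
   each input change may break the chain. *)
Definition chain_potential h a c : nat := #|fresh h| + chain_head a h - 1 - c.

Definition double_query (P : history n -> input n -> nat -> nat) h a c : Prop :=
  exists x y, [/\ a x < a y, x \in max_cand h, y \in min_cand h &
    forall a' c', adv_move a c (lost_to x y :: h) a' c' ->
      P h a c <= (P (lost_to x y :: h) a' c').+1].

Lemma double_query_pairing h a c : 0 < pairing_potential h a c ->
  double_query pairing_potential h a c.
Proof.
rewrite /pairing_potential divn_gt0 // => /card_gt1P [u [v [uF vF uv]]].
wlog lt : u v uF vF uv / a u < a v.
  move=> gen; case: (ltngtP (a u) (a v)) => [|gt|/val_inj/perm_inj eq_uv].
  - exact: gen.
  - by apply: (gen v u) => //; rewrite eq_sym.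
  - by rewrite eq_uv eqxx in uv.
move: (uF) (vF); rewrite !in_fresh => /andP [uM _] /andP [_ vW].
exists u, v; split=> // _ _ _.
by rewrite [#|fresh h|](@card_fresh_cons (lost_to u v)) //= uF vF; lia.
Qed.

Lemma chain_head_cons a h x y : x \in min_cand h -> x != y ->
  {in fresh h, forall z, z != x -> z != y -> a z < a x} ->
  chain_head a (lost_to x y :: h).
Proof.
move=> xW xy below; apply/existsP; exists x; apply/andP; split.
  by rewrite in_lost_only max_cand_cons min_cand_cons !in_setD1 /= eqxx xy xW.
apply/forallP => z; apply/implyP; rewrite fresh_cons !in_setD1 /=.
by case/and3P => zy zx zF; apply: below.
Qed.

Lemma chain_potential_step h a c x y :
  chain_head a (lost_to x y :: h) ->
  #|fresh h| + chain_head a h <= #|fresh (lost_to x y :: h)| + 2 ->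
  forall a' c', adv_move a c (lost_to x y :: h) a' c' ->
    chain_potential h a c <= (chain_potential (lost_to x y :: h) a' c').+1.
Proof.
by move=> head le a' c' [[-> ->]|[-> _]]; rewrite /chain_potential ?head; lia.
Qed.

Lemma double_query_chain h a c : 0 < chain_potential h a c ->
  double_query chain_potential h a c.
Proof.
rewrite /chain_potential => P_gt0.
have [head|no_head] := boolP (chain_head a h).
  have [u /andP [uL /forallP above]] := existsP head.
  have [z0 z0F] : exists z0, z0 \in fresh h.
    by apply/card_gt0P; move: P_gt0; rewrite head; lia.
  have [z zF z_max] := input_argmax a z0F.
  have zu : a z < a u := implyP (above z) zF.
  move: (zF) uL; rewrite in_fresh in_lost_only => /andP [zM zW] /andP [uM uW].
  have zu_ne : z != u by apply: contraTneq zu => ->; rewrite ltnn.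
  have uF : u \notin fresh h by rewrite in_fresh negb_and uM.
  exists z, u; split=> //; apply: chain_potential_step.
    by apply: chain_head_cons => // w wF wz _; apply: z_max.
  by rewrite head [#|fresh h|](@card_fresh_cons (lost_to z u)) //= zF (negbTE uF); lia.
have F2 : 1 < #|fresh h| by move: P_gt0; rewrite (negbTE no_head); lia.
have [y0 y0F] : exists y0, y0 \in fresh h by apply/card_gt0P; lia.
have [y yF y_max] := input_argmax a y0F.
have [x0 x0F] : exists x0, x0 \in fresh h :\ y.
  by apply/card_gt0P; move: F2; rewrite (cardsD1 y) yF; lia.
have [x xF x_max] := input_argmax a x0F.
move: xF; rewrite in_setD1 => /andP [xy xF].
move: (xF) (yF); rewrite !in_fresh => /andP [xM xW] /andP [_ yW].
exists x, y; split=> //; first exact: y_max.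
apply: chain_potential_step.
  by apply: chain_head_cons => // w wF wx wy; apply: x_max; rewrite ?in_setD1 ?wy.
by rewrite (negbTE no_head) [#|fresh h|](@card_fresh_cons (lost_to x y)) //= xF yF; lia.
Qed.

Lemma max_cand_nil : max_cand [::] = setT.
Proof. by apply/setP => z; rewrite !inE. Qed.

Lemma min_cand_nil : min_cand [::] = setT.
Proof. by apply/setP => z; rewrite !inE. Qed.

Lemma uncertainty_nil : uncertainty [::] = n + n - 2.
Proof. by rewrite /uncertainty max_cand_nil min_cand_nil cardsT card_ord. Qed.

Lemma card_fresh_nil : #|fresh [::]| = n.
Proof. by rewrite /fresh max_cand_nil min_cand_nil setIT cardsT card_ord. Qed.

Lemma chain_head_nil a : chain_head a [::] = false.
Proof.
by apply/existsP => -[u]; rewrite /lost_only max_cand_nil min_cand_nil setDv in_set0.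
Qed.

Lemma layered_nil a : layered a [::].
Proof.
by split=> x y; rewrite /lost_only /won_only max_cand_nil min_cand_nil setDv in_set0.
Qed.

Section Nonempty.

Hypothesis n_gt0 : 0 < n.

Definition top b : 'I_n := [arg max_(i > Ordinal n_gt0) b i].
Definition bot b : 'I_n := [arg min_(i < Ordinal n_gt0) b i].

Lemma top_max b x : b x <= b (top b).
Proof. by rewrite /top; case: arg_maxnP => // i _; apply. Qed.

Lemma bot_min b x : b (bot b) <= b x.
Proof. by rewrite /bot; case: arg_minnP => // i _; apply. Qed.

Lemma top_max_cand b h : wf_history h -> consistent b h -> top b \in max_cand h.
Proof.
move=> W; rewrite consistentE // inE => /allP C; apply/mapP => -[t /C].
by move=> + topE; rewrite -topE ltnNge top_max.
Qed.

Lemma bot_min_cand b h : wf_history h -> consistent b h -> bot b \in min_cand h.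
Proof.
move=> W; rewrite consistentE // inE => /allP C; apply/mapP => -[t /C].
by move=> + botE; rewrite -botE ltnNge bot_min.
Qed.

Lemma max_cand_gt0 b h : wf_history h -> consistent b h -> 0 < #|max_cand h|.
Proof. by move=> W C; apply/card_gt0P; exists (top b); apply: top_max_cand. Qed.

Lemma min_cand_gt0 b h : wf_history h -> consistent b h -> 0 < #|min_cand h|.
Proof. by move=> W C; apply/card_gt0P; exists (bot b); apply: bot_min_cand. Qed.

Lemma determined_cards a h : wf_history h -> consistent a h ->
  determined h <-> #|max_cand h| <= 1 /\ #|min_cand h| <= 1.
Proof.
move=> W C; split=> [[i [j det]]|[/card_le1_eqP max1 /card_le1_eqP min1]].
  have max_i : {in max_cand h, forall x, x = i}.
    move=> x /(lift_max_cand W C) [b /det [b_le _] b_top].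
    by apply/eqP; apply: contraLR (b_le x); rewrite eq_sym -ltnNge => /b_top.
  have min_j : {in min_cand h, forall x, x = j}.
    move=> x /(lift_min_cand W C) [b /det [_ b_ge] b_bot].
    by apply/eqP; apply: contraLR (b_ge x); rewrite eq_sym -ltnNge => /b_bot.
  split; apply/card_le1_eqP => x y.
    by move=> /max_i -> /max_i ->.
  by move=> /min_j -> /min_j ->.
exists (top a), (bot a) => b Cb; split=> x.
  by rewrite (max1 (top b) (top a)) ?top_max ?top_max_cand.
by rewrite (min1 (bot b) (bot a)) ?bot_min ?bot_min_cand.
Qed.

Lemma determined_uncertainty a h : wf_history h -> consistent a h ->
  determined h <-> uncertainty h = 0.
Proof.
move=> W C; apply: iff_trans (determined_cards W C) _; rewrite /uncertainty.
by have := max_cand_gt0 W C; have := min_cand_gt0 W C; lia.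
Qed.

Lemma uncertainty_cons b t h : wf_history (t :: h) -> consistent b (t :: h) ->
  uncertainty h =
  uncertainty (t :: h) + (loser t \in max_cand h) + (winner t \in min_cand h).
Proof.
move=> W C; have := max_cand_gt0 W C; have := min_cand_gt0 W C.
by rewrite /uncertainty (card_max_cand_cons t h) (card_min_cand_cons t h); lia.
Qed.

(* If both candidacies go, [loser t < winner t] puts the loser below [th] or
   the winner above it, and that element leaves [wrong_side]. *)
Lemma threshold_step a t h th : wf_history (t :: h) -> consistent a (t :: h) ->
  uncertainty h + wrong_side a (t :: h) th <= (uncertainty (t :: h) + wrong_side a h th).+1.
Proof.
move=> W C; have lw : a (loser t) < a (winner t).
  by move: C; rewrite consistentE // => /andP [].
rewrite (uncertainty_cons W C) /wrong_side.
rewrite (cardsID1 (max_cand h) _ (loser t)) (cardsID1 (min_cand h) _ (winner t)).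
rewrite -max_cand_cons -min_cand_cons !in_setI !in_set.
case: (loser t \notin _); case: (winner t \notin _);
by case: (ltnP (a (loser t)) th); case: (ltnP th (a (winner t))) => /=; lia.
Qed.

Lemma threshold_no_win m h a c th : wf_history h -> consistent a h ->
  m + wrong_side a h th < uncertainty h -> ~ questioner_wins m h a c.
Proof.
elim: m h => [|m IH] h W C lt /=.
  by move/(determined_uncertainty W C); lia.
case=> [/(determined_uncertainty W C)|[q [ne win]]]; first lia.
have W' : wf_history ((q, answer a q) :: h) by rewrite /= ne.
have C' : consistent a ((q, answer a q) :: h) by rewrite consistent_answer.
apply: IH (win a c (or_introl (conj erefl erefl))) => //.
by have := threshold_step th W' C'; lia.
Qed.

Lemma layered_threshold a h : wf_history h -> consistent a h -> layered a h ->
  exists th, wrong_side a h th <= #|fresh h| - 1.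
Proof.
move=> W C [lost_below fresh_below].
have [z zW z_max] := input_argmax a (bot_min_cand W C).
exists (a z); rewrite /wrong_side.
have -> : min_cand h :&: [set y | a z < a y] = set0.
  apply/setP => y; rewrite in_setI in_set0; apply/andP => -[yW]; rewrite inE.
  by have [->|/(z_max _ yW)/ltnW] := eqVneq y z; rewrite ?ltnn // ltnNge => ->.
rewrite cards0 addn0; have [zM|zM] := boolP (z \in max_cand h).
  have zF : z \in fresh h by rewrite in_fresh zM.
  rewrite [#|fresh h|](cardsD1 z) zF add1n subn1 /=.
  apply/subset_leq_card/subsetP => x; rewrite in_setI in_setD1 => /andP [xM].
  rewrite inE => lt; apply/andP; split; first by apply: contraTneq lt => ->; rewrite ltnn.
  rewrite in_fresh xM; apply: contraTT lt => xW.
  by rewrite -leqNgt ltnW // fresh_below // in_won_only xW.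
have -> : max_cand h :&: [set x | a x < a z] = set0.
  apply/setP => x; rewrite in_setI in_set0; apply/andP => -[xM]; rewrite inE.
  by rewrite ltnNge ltnW // lost_below // in_lost_only zM.
by rewrite cards0.
Qed.

Lemma layered_no_win m h a c : wf_history h -> consistent a h -> layered a h ->
  m + max_doubles #|fresh h| c < uncertainty h -> ~ questioner_wins m h a c.
Proof.
elim: m h a c => [|m IH] h a c W C L lt.
  by move/(determined_uncertainty W C); lia.
case: c lt => [|c] lt.
  have [th th_le] := layered_threshold W C L.
  by apply: (threshold_no_win (th := th) W C); move: lt; rewrite /max_doubles; lia.
case=> [/(determined_uncertainty W C)|[q [ne win]]]; first lia.
set t := (q, answer a q) in win.
have W' : wf_history (t :: h) by rewrite /= ne.
have C' : consistent a (t :: h) by rewrite consistent_answer.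
have lw : a (loser t) < a (winner t) by apply: answer_loser_lt.
have double_fresh : (loser t \in max_cand h) + (winner t \in min_cand h) <=
                    ((loser t \in fresh h) && (winner t \in fresh h)).+1.
  have := @layered_fresh _ _ (loser t) (winner t) L.
  by case: (_ \in max_cand h); case: (_ \in min_cand h) => // /(_ isT isT lw) [-> ->].
have lw_ne : loser t != winner t by apply: contraTneq lw => ->; rewrite ltnn.
move: lt; rewrite (uncertainty_cons W' C') (card_fresh_cons h lw_ne) => lt.
have [touched|untouched] := boolP ((loser t \in fresh h) || (winner t \in fresh h)).
  have [a' Ca' La'] := exists_layered W' C'.
  apply: IH (win a' c (or_intror (conj erefl Ca'))) => //.
  by have := max_doubles_fresh #|fresh (t :: h)| c touched; lia.
move: untouched double_fresh lt; rewrite negb_or => /andP [lF wF].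
rewrite (negbTE lF) (negbTE wF) !add0n => double_fresh lt.
apply: IH (win a c.+1 (or_introl (conj erefl erefl))) => //; last by lia.
exact: layered_cons.
Qed.

Lemma exists_reducing_query h a : wf_history h -> consistent a h -> 0 < uncertainty h ->
  exists q : query n, q.1 != q.2 /\ uncertainty ((q, answer a q) :: h) < uncertainty h.
Proof.
move=> W C U_gt0.
suff [x [y [xy same]]] : exists x y, x != y /\
    ((x \in max_cand h) && (y \in max_cand h) || (x \in min_cand h) && (y \in min_cand h)).
  exists (x, y); split=> //; set t := ((x, y), answer a (x, y)).
  have W' : wf_history (t :: h) by rewrite /= xy.
  have C' : consistent a (t :: h) by rewrite consistent_answer.
  have : (loser t \in max_cand h) || (winner t \in min_cand h).
    rewrite /loser /winner /=; case: (answer _ _);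
    by case/orP: same => /andP [xS yS]; rewrite ?xS ?yS ?orbT.
  rewrite (uncertainty_cons W' C').
  by case: (_ \in max_cand h); case: (_ \in min_cand h) => //= _; lia.
have [M2|M1] := ltnP 1 #|max_cand h|.
  by have [x [y [xM yM xy]]] := card_gt1P M2; exists x, y; rewrite xM yM.
have : 1 < #|min_cand h| by move: U_gt0; rewrite /uncertainty; lia.
by case/card_gt1P => x [y [xW yW xy]]; exists x, y; rewrite xW yW orbT.
Qed.

Lemma potential_wins (P : history n -> input n -> nat -> nat) m h a c :
  (forall h a c, 0 < P h a c -> double_query P h a c) ->
  wf_history h -> consistent a h ->
  uncertainty h <= m + minn (P h a c) m -> questioner_wins m h a c.
Proof.
move=> P_double; elim: m h a c => [|m IH] h a c W C le.
  by apply/(determined_uncertainty W C); lia.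
have [U0|U_gt0] := posnP (uncertainty h).
  by left; apply/(determined_uncertainty W C).
right; have [P0|P_gt0] := posnP (P h a c).
  have [q [ne drop]] := exists_reducing_query W C U_gt0.
  exists q; split=> //= a' c' mv.
  apply: IH; [by rewrite /= ne | exact: adv_move_consistent mv |].
  by move: le; rewrite P0; lia.
have [x [y [lt xM yW step]]] := P_double h a c P_gt0.
have xy : x != y by apply: contraTneq lt => ->; rewrite ltnn.
exists (x, y); split=> //= a' c' mv.
have C' := adv_move_consistent C mv.
have ans : answer a (x, y) = true by [].
rewrite ans -/(lost_to x y) in mv C' *.
have W' : wf_history (lost_to x y :: h) by rewrite /= xy.
apply: IH => //.
have := uncertainty_cons W' C'; rewrite /loser /winner /= xM yW /= addn1 addn1.
by have := step a' c' mv; lia.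
Qed.

End Nonempty.

End Game.

Theorem theorem1 (n k : nat) (hn : (0 < n)%N) :
  D_value k n (minn (n + k - 1) ((3 * n).+1 %/ 2 - 2)).
Proof.
split=> [a|m win].
  have [le|lt] := leqP (n + k - 1) ((3 * n).+1 %/ 2 - 2).
    apply: (potential_wins hn (@double_query_chain n)) => //.
    by rewrite uncertainty_nil /chain_potential card_fresh_nil chain_head_nil; lia.
  apply: (potential_wins hn (@double_query_pairing n)) => //.
  by rewrite uncertainty_nil /pairing_potential card_fresh_nil; lia.
rewrite leqNgt; apply/negP => lt.
apply: (layered_no_win hn _ _ (layered_nil 1%g) _ (win 1%g)) => //.
by rewrite uncertainty_nil card_fresh_nil /max_doubles; lia.
Qed.
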